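(* Let $n\ge 1$ be an integer. (1) If $a$ is a real number with $a>2$, then $\max\{B_i(a): 2^{n-1}\le i\le 2^{n}\}=a^{n}=B_{2^n}(a)$. (2) If $0<a<2$, then $$\min\{B_i(a): 2^{n-1}\le i\le 2^{n}\}=\begin{cases} a^{n} & \text{if } 0<a\le 1,\\ a^{n-1} & \text{if } 1<a<2.\end{cases}$$
   Context: The Stern polynomials $B_n(t)\in\mathbb{Z}[t]$, $n\ge 0$, are defined by $B_0(t)=0$, $B_1(t)=1$, $B_{2n}(t)=tB_n(t)$ and $B_{2n+1}(t)=B_n(t)+B_{n+1}(t)$ for $n\ge 1$. *)

From Stdlib Require Import Reals Arith.
Open Scope R_scope.

(* Evaluation at t of the Stern polynomial B_n(t), defined by
   B_0 = 0, B_1 = 1, B_{2m} = t B_m, B_{2m+1} = B_m + B_{m+1} (m >= 1).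
   Fuel-based recursion; fuel n suffices for index n since the recursive
   indices m, m+1 are < 2m, 2m+1 respectively when m >= 1. *)
Fixpoint stern_fuel (fuel : nat) (n : nat) (t : R) : R :=
  match fuel with
  | O => 0
  | S f =>
    match n with
    | O => 0
    | S O => 1
    | _ => if Nat.even n then t * stern_fuel f (Nat.div2 n) t
           else stern_fuel f (Nat.div2 n) t + stern_fuel f (S (Nat.div2 n)) t
    end
  end.

Definition stern (n : nat) (t : R) : R := stern_fuel n n t.

(* Doubling the index multiplies the Stern polynomial by [a], so [B_(2^k)(a) = a^k].
   For the other indices of the dyadic block one argues by induction along the
   recurrence: the odd step gives [B_(2m+1)(a) = B_m(a) + B_(m+1)(a)], a sum of two
   terms of the previous block.  When [a >= 2] each is at most [a^(k-1)], so the sum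
   is at most [2 a^(k-1) <= a^k]; when [a <= 2] the same comparison goes the other
   way, with the lower bound [a^k] on [1 <= i <= 2^k] if [a <= 1] and the lower
   bound [a^(k-1)] on the block [2^(k-1) <= i <= 2^k] if [1 <= a]. *)
From Stdlib Require Import Reals Arith Lia Lra Psatz.
Open Scope R_scope.

Lemma stern_fuel_stable f g n t : (n <= f)%nat -> (n <= g)%nat ->
  stern_fuel f n t = stern_fuel g n t.
Proof.
  revert g n. induction f as [|f IHf]; intros g n Hf Hg.
  - replace n with 0%nat by lia. now destruct g.
  - destruct g as [|g]; [now replace n with 0%nat by lia|].
    destruct n as [|[|n]]; try reflexivity.
    cbn [stern_fuel].
    pose proof (Nat.div2_odd (S (S n))) as Hhalf.
    rewrite <- Nat.negb_even in Hhalf.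
    destruct (Nat.even (S (S n))); cbn [negb Nat.b2n] in Hhalf.
    + rewrite (IHf g); auto; lia.
    + rewrite (IHf g (Nat.div2 _)), (IHf g (S (Nat.div2 _))); auto; lia.
Qed.

Lemma stern0 t : stern 0 t = 0.
Proof. reflexivity. Qed.

Lemma stern1 t : stern 1 t = 1.
Proof. reflexivity. Qed.

Lemma stern_fuel_succ f n t : (2 <= n)%nat ->
  stern_fuel (S f) n t =
  if Nat.even n then t * stern_fuel f (Nat.div2 n) t
  else stern_fuel f (Nat.div2 n) t + stern_fuel f (S (Nat.div2 n)) t.
Proof. intros Hn. destruct n as [|[|n]]; [lia|lia|reflexivity]. Qed.

Lemma stern_double m t : (1 <= m)%nat -> stern (2 * m) t = t * stern m t.
Proof.
  intros Hm. unfold stern. replace (2 * m)%nat with (S (2 * m - 1)) at 1 by lia.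
  rewrite stern_fuel_succ, Nat.even_mul, Nat.div2_double by lia.
  cbn [Nat.even orb].
  f_equal. apply stern_fuel_stable; lia.
Qed.

Lemma stern_succ_double m t : (1 <= m)%nat ->
  stern (2 * m + 1) t = stern m t + stern (m + 1) t.
Proof.
  intros Hm. unfold stern. replace (2 * m + 1)%nat with (S (2 * m)) at 1 by lia.
  rewrite stern_fuel_succ by lia.
  replace (2 * m + 1)%nat with (S (2 * m)) by lia.
  rewrite Nat.even_succ, Nat.odd_mul, Nat.div2_succ_double, Nat.add_1_r.
  cbn [Nat.odd Nat.even negb andb].
  f_equal; apply stern_fuel_stable; lia.
Qed.

Lemma stern_pow2 k t : stern (2 ^ k) t = t ^ k.
Proof.
  induction k as [|k IHk]; [reflexivity|].
  rewrite Nat.pow_succ_r', stern_double, IHk; [reflexivity|].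
  pose proof (Nat.pow_nonzero 2 k). lia.
Qed.

Lemma stern_rec_ind (P : nat -> Prop) :
  P 0%nat -> P 1%nat ->
  (forall m, (1 <= m)%nat -> P m -> P (2 * m)%nat) ->
  (forall m, (1 <= m)%nat -> P m -> P (m + 1)%nat -> P (2 * m + 1)%nat) ->
  forall i, P i.
Proof.
  intros H0 H1 Hdouble Hsucc_double i.
  induction i as [i IH] using lt_wf_ind.
  destruct (Nat.Even_or_Odd i) as [[[|m] ->]|[[|m] ->]].
  - exact H0.
  - apply (Hdouble (S m)); [lia | apply IH; lia ..].
  - exact H1.
  - apply (Hsucc_double (S m)); [lia | apply IH; lia ..].
Qed.

Lemma stern_le_pow a : 2 <= a -> forall i k, (i <= 2 ^ k)%nat -> stern i a <= a ^ k.
Proof.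
  intros Ha i. induction i as [| |i ? IHm|i ? IHm IHm1] using stern_rec_ind; intros k Hk.
  - rewrite stern0. apply pow_le; lra.
  - rewrite stern1. apply pow_R1_Rle; lra.
  - destruct k as [|k]; [simpl in Hk; lia|]. rewrite Nat.pow_succ_r' in Hk.
    rewrite stern_double by lia. simpl.
    apply Rmult_le_compat_l; [lra|]. apply IHm; lia.
  - destruct k as [|k]; [simpl in Hk; lia|]. rewrite Nat.pow_succ_r' in Hk.
    rewrite stern_succ_double by lia. simpl.
    assert (Hm := IHm k ltac:(lia)).
    assert (Hm1 := IHm1 k ltac:(lia)).
    assert (0 <= a ^ k) by (apply pow_le; lra). nra.
Qed.

Lemma pow_le_stern_small a : 0 < a <= 1 ->
  forall i k, (1 <= i <= 2 ^ k)%nat -> a ^ k <= stern i a.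
Proof.
  intros Ha i. induction i as [| |i ? IHm|i ? IHm IHm1] using stern_rec_ind; intros k Hk.
  - lia.
  - rewrite stern1, <- (pow1 k). apply pow_incr; lra.
  - destruct k as [|k]; [simpl in Hk; lia|]. rewrite Nat.pow_succ_r' in Hk.
    rewrite stern_double by lia. simpl.
    apply Rmult_le_compat_l; [lra|]. apply IHm; lia.
  - destruct k as [|k]; [simpl in Hk; lia|]. rewrite Nat.pow_succ_r' in Hk.
    rewrite stern_succ_double by lia. simpl.
    assert (Hm := IHm k ltac:(lia)).
    assert (Hm1 := IHm1 k ltac:(lia)).
    assert (0 < a ^ k) by (apply pow_lt; lra). nra.
Qed.

Lemma pow_le_stern_dyadic a : 1 <= a <= 2 ->
  forall i k, (2 ^ k <= i <= 2 ^ S k)%nat -> a ^ k <= stern i a.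
Proof.
  intros Ha i. induction i as [| |i ? IHm|i ? IHm IHm1] using stern_rec_ind; intros k Hk;
    pose proof (Nat.pow_nonzero 2 k); rewrite Nat.pow_succ_r' in Hk.
  - lia.
  - destruct k as [|k]; [simpl; rewrite stern1; lra|].
    rewrite Nat.pow_succ_r' in Hk. pose proof (Nat.pow_nonzero 2 k). lia.
  - rewrite stern_double by lia. destruct k as [|k].
    + simpl in Hk. replace i with 1%nat by lia. rewrite stern1. simpl. lra.
    + rewrite Nat.pow_succ_r' in Hk. simpl.
      apply Rmult_le_compat_l; [lra|]. apply IHm. rewrite Nat.pow_succ_r'. lia.
  - destruct k as [|k]; [simpl in Hk; lia|]. rewrite Nat.pow_succ_r' in Hk.
    rewrite stern_succ_double by lia. simpl.
    assert (Hm := IHm k ltac:(rewrite Nat.pow_succ_r'; lia)).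
    assert (Hm1 := IHm1 k ltac:(rewrite Nat.pow_succ_r'; lia)).
    assert (0 < a ^ k) by (apply pow_lt; lra). nra.
Qed.

Theorem theorem2p7 (n : nat) (Hn : (1 <= n)%nat) :
  (forall a : R, a > 2 ->
     stern (2 ^ n) a = a ^ n /\
     (forall i : nat, (2 ^ (n - 1) <= i <= 2 ^ n)%nat -> stern i a <= a ^ n)) /\
  (forall a : R, 0 < a < 2 ->
     let m := if Rle_dec a 1 then a ^ n else a ^ (n - 1) in
     (exists i : nat, (2 ^ (n - 1) <= i <= 2 ^ n)%nat /\ stern i a = m) /\
     (forall i : nat, (2 ^ (n - 1) <= i <= 2 ^ n)%nat -> m <= stern i a)).
Proof.
  destruct n as [|k]; [lia|]. replace (S k - 1)%nat with k by lia.
  pose proof (Nat.pow_nonzero 2 k). rewrite Nat.pow_succ_r'.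
  split.
  - intros a Ha. rewrite <- Nat.pow_succ_r'. split; [apply stern_pow2|].
    intros i Hi. apply stern_le_pow; [lra|lia].
  - intros a Ha m. unfold m. destruct (Rle_dec a 1) as [Hle|Hgt].
    + split.
      * exists (2 ^ S k)%nat. rewrite Nat.pow_succ_r'. split; [lia|].
        rewrite <- Nat.pow_succ_r'. apply stern_pow2.
      * intros i Hi. apply pow_le_stern_small; [lra|]. rewrite Nat.pow_succ_r'. lia.
    + split.
      * exists (2 ^ k)%nat. split; [lia|apply stern_pow2].
      * intros i Hi. apply pow_le_stern_dyadic; [lra|]. rewrite Nat.pow_succ_r'. lia.
Qed.
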